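(* Let $A$ and $B$ be Banach algebras and $\phi$ a nonzero character on $A$. For $D_1\in\mathcal Z^1(A,A^* )$ and $D_4\in\mathcal Z^1_c(B,B^* )$, the map $D(a,b)=(D_1(a),D_4(b))$ is a bounded derivation $A\oplus_\phi B\to(A\oplus_\phi B)^*\cong A^*\oplus_\infty B^*$, it is inner if and only if $D_1$ and $D_4$ are inner, and the assignment $(D_1,D_4)\mapsto D$ induces an injective linear map $$\mathcal H^1(A,A^* )\oplus\mathcal H^1_c(B,B^* )\longrightarrow\mathcal H^1(A\oplus_\phi B,(A\oplus_\phi B)^* ).$$
   Context: For Banach algebras $A,B$ and a nonzero character $\phi$ on $A$, the $\phi$-Lau product $A\oplus_\phi B$ is the Banach space $\{(a,b):a\in A,b\in B\}$ with norm $\|a\|+\|b\|$ and product $(a,b)(a',b')=(aa',\ \phi(a)b'+\phi(a')b+bb')$. Its dual is identified with $A^*\oplus_\infty B^*$ via $\langle(a,b),(f,g)\rangle=f(a)+g(b)$. For a Banach algebra $C$, $C^*$ is a $C$-bimodule via $\langle c\cdot f,x\rangle=f(xc)$, $\langle f\cdot c,x\rangle=f(cx)$; $\mathcal Z^1(C,C^* )$ is the space of bounded derivations $D:C\to C^*$ ($D(xy)=x\cdot D(y)+D(x)\cdot y$), $\mathcal B^1(C,C^* )$ the inner derivations $c\mapsto c\cdot f-f\cdot c$, $\mathcal H^1(C,C^* )=\mathcal Z^1/\mathcal B^1$. A derivation $D:C\to C^*$ is cyclic if $\langle x,D(y)\rangle+\langle y,D(x)\rangle=0$ for all $x,y\in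 C$; $\mathcal Z^1_c(C,C^* )$ is the space of cyclic derivations (it contains $\mathcal B^1(C,C^* )$) and $\mathcal H^1_c(C,C^* )=\mathcal Z^1_c(C,C^* )/\mathcal B^1(C,C^* )$. *)

(* Scalars: an arbitrary R : numFieldType (covers C-like and
   R-like scalar fields); Banach algebras are spelled out explicitly. *)
From HB Require Import structures.
From mathcomp Require Import all_boot all_order all_algebra.
Set Implicit Arguments. Unset Strict Implicit. Unset Printing Implicit Defensive.
Import Order.TTheory GRing.Theory Num.Theory.
Local Open Scope ring_scope.

Section Defs.
Variable R : numFieldType.

Definition complete_norm (V : lmodType R) (nrm : V -> R) : Prop :=
  forall u : nat -> V,
    (forall eps : R, 0 < eps -> exists N : nat, forall m n : nat,
        (N <= m)%N -> (N <= n)%N -> nrm (u m - u n) < eps) ->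
    exists l : V, forall eps : R, 0 < eps -> exists N : nat, forall n : nat,
        (N <= n)%N -> nrm (u n - l) < eps.

Definition banach_algebra (V : lmodType R) (mul : V -> V -> V) (nrm : V -> R)
  : Prop :=
  [/\ (forall x y z, mul x (mul y z) = mul (mul x y) z),
      (forall k x y z, mul (k *: x + y) z = k *: mul x z + mul y z) /\
      (forall k x y z, mul z (k *: x + y) = k *: mul z x + mul z y),
      (forall x, 0 <= nrm x) /\ (forall x, nrm x = 0 -> x = 0) /\
      (forall x y, nrm (x + y) <= nrm x + nrm y),
      (forall k x, nrm (k *: x) = `|k| * nrm x) /\
      (forall x y, nrm (mul x y) <= nrm x * nrm y) &
      complete_norm nrm].

Definition character (V : lmodType R) (mul : V -> V -> V) (phi : V -> R) : Prop :=
  [/\ (forall k x y, phi (k *: x + y) = k * phi x + phi y),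
      (forall x y, phi (mul x y) = phi x * phi y) &
      exists x, phi x != 0].

Definition dual_elem (V : lmodType R) (nrm : V -> R) (f : V -> R) : Prop :=
  (forall k x y, f (k *: x + y) = k * f x + f y) /\
  exists M : R, forall x, `|f x| <= M * nrm x.

(* D : V -> V^*, encoded as D a x = <x, D(a)>.
   Bounded derivation: linear, bounded, D(ab) = a.D(b) + D(a).b, where
   <x, a.f> = f(xa) and <x, f.b> = f(bx). *)
Definition derivation (V : lmodType R) (mul : V -> V -> V) (nrm : V -> R)
  (D : V -> V -> R) : Prop :=
  [/\ (forall a, dual_elem nrm (D a)),
      (forall k a b x, D (k *: a + b) x = k * D a x + D b x),
      (exists M : R, forall a x, `|D a x| <= M * nrm a * nrm x) &
      (forall a b x, D (mul a b) x = D b (mul x a) + D a (mul b x))].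

Definition inner_der (V : lmodType R) (mul : V -> V -> V) (nrm : V -> R)
  (D : V -> V -> R) : Prop :=
  exists f : V -> R, dual_elem nrm f /\
    forall a x, D a x = f (mul x a) - f (mul a x).

Definition cyclic_der (V : lmodType R) (mul : V -> V -> V) (nrm : V -> R)
  (D : V -> V -> R) : Prop :=
  derivation mul nrm D /\ forall x y, D x y + D y x = 0.

Definition lau_mul (A B : lmodType R) (phi : A -> R) (mulA : A -> A -> A)
  (mulB : B -> B -> B) (p q : A * B) : A * B :=
  (mulA p.1 q.1, phi p.1 *: q.2 + phi q.1 *: p.2 + mulB p.2 q.2).

Definition lau_norm (A B : lmodType R) (nA : A -> R) (nB : B -> R) (p : A * B) : R :=
  nA p.1 + nB p.2.

(* D(a,b) = (D1 a, D4 b) in A^* (+)_oo B^*, identified with (A (+)_phi B)^*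
   via <(a,b),(f,g)> = f(a) + g(b). *)
Definition lau_der (A B : lmodType R) (D1 : A -> A -> R) (D4 : B -> B -> R)
  (p q : A * B) : R := D1 p.1 q.1 + D4 p.2 q.2.

Definition der_comb (V : lmodType R) (k : R) (D D' : V -> V -> R) : V -> V -> R :=
  fun a x => k * D a x + D' a x.
Definition der_sub (V : lmodType R) (D D' : V -> V -> R) : V -> V -> R :=
  fun a x => D a x - D' a x.

End Defs.

(* The derivation D = (D1, D4) acts componentwise, and the only place where the
   twisted Lau product couples the two components is through the terms
   phi(a) b' + phi(a') b of the second coordinate.  In the Leibniz rule these
   contribute phi(x) (D4(b)(b') + D4(b')(b)), which vanishes exactly because D4
   is cyclic.  An inner derivation of the Lau product implemented by F restricts,
   along A x 0 and 0 x B, to functionals implementing D1 and D4; conversely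
   f (+) g implements D when f and g implement D1 and D4, the phi-terms
   cancelling by additivity of g.  Since D depends linearly on (D1, D4), applying
   this to differences gives injectivity on cohomology. *)
From HB Require Import structures.
From mathcomp Require Import all_boot all_order all_algebra.
From mathcomp Require Import ring.
From Stdlib Require Import FunctionalExtensionality.
Set Implicit Arguments. Unset Strict Implicit. Unset Printing Implicit Defensive.
Import Order.TTheory GRing.Theory Num.Theory.
Local Open Scope ring_scope.

Section Bounds.
Variable R : numFieldType.

Lemma ler_norm_bound (c M n : R) : 0 <= n -> `|c| <= M * n -> `|c| <= `|M| * n.
Proof.
move=> n_ge0 cM; have Mn_ge0 : 0 <= M * n by exact: le_trans cM.
by rewrite -(ger0_norm n_ge0) -normrM ger0_norm.
Qed.

Lemma ler_normD_bounds (c d P Q a b : R) : 0 <= a -> 0 <= b ->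
  `|c| <= P * a -> `|d| <= Q * b -> `|c + d| <= (`|P| + `|Q|) * (a + b).
Proof.
move=> a_ge0 b_ge0 /(ler_norm_bound a_ge0) cP /(ler_norm_bound b_ge0) dQ.
apply: le_trans (ler_normD _ _) _.
have -> : (`|P| + `|Q|) * (a + b) = (`|P| * a + `|Q| * b) + (`|P| * b + `|Q| * a).
  by ring.
apply: le_trans (lerD cP dQ) _.
by rewrite lerDl addr_ge0 // mulr_ge0.
Qed.

Lemma ler_normD_bounds2 (c d P Q a x b y : R) :
  0 <= a -> 0 <= b -> 0 <= x -> 0 <= y ->
  `|c| <= P * a * x -> `|d| <= Q * b * y ->
  `|c + d| <= (`|P| + `|Q|) * (a + b) * (x + y).
Proof.
move=> a_ge0 b_ge0 x_ge0 y_ge0; rewrite -!mulrA => cP dQ.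
apply: le_trans (ler_normD_bounds (mulr_ge0 a_ge0 x_ge0) (mulr_ge0 b_ge0 y_ge0)
  cP dQ) _.
rewrite ler_wpM2l ?addr_ge0 //.
have -> : (a + b) * (x + y) = (a * x + b * y) + (a * y + b * x) by ring.
by rewrite lerDl addr_ge0 // mulr_ge0.
Qed.

End Bounds.

Section LinearForms.
Variables (R : numFieldType) (V : lmodType R).

Definition lin_form (f : V -> R) : Prop :=
  forall k x y, f (k *: x + y) = k * f x + f y.

Variables (f : V -> R) (f_lin : lin_form f).

Lemma lin_form0 : f 0 = 0.
Proof.
apply: (@addrI _ (f 0)); rewrite addr0.
by have := f_lin 1 0 0; rewrite scaler0 add0r mul1r.
Qed.

Lemma lin_formD x y : f (x + y) = f x + f y.
Proof. by have := f_lin 1 x y; rewrite scale1r mul1r. Qed.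

Lemma lin_formZ k x : f (k *: x) = k * f x.
Proof. by have := f_lin k x 0; rewrite !addr0 lin_form0 addr0. Qed.

End LinearForms.

Lemma character0 (R : numFieldType) (A : lmodType R) (mul : A -> A -> A)
  (phi : A -> R) : character mul phi -> phi 0 = 0.
Proof. by case=> phi_lin _ _; apply: lin_form0. Qed.

Section BanachAlgebra.
Variables (R : numFieldType) (V : lmodType R) (mul : V -> V -> V) (nrm : V -> R).
Hypothesis banachV : banach_algebra mul nrm.

Lemma banach_mul0l z : mul 0 z = 0.
Proof.
case: banachV => _ [mulDl _] _ _ _.
apply: (@addrI _ (mul 0 z)); rewrite addr0.
by have := mulDl 1 0 0 z; rewrite scaler0 add0r scale1r.
Qed.

Lemma banach_norm_ge0 x : 0 <= nrm x.
Proof. by case: banachV => _ _ []. Qed.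

Lemma banach_norm0 : nrm 0 = 0.
Proof.
by case: banachV => _ _ _ [nrmZ _] _; rewrite -(scale0r 0) nrmZ normr0 mul0r.
Qed.

End BanachAlgebra.

Section Derivations.
Variables (R : numFieldType) (V : lmodType R) (mul : V -> V -> V) (nrm : V -> R)
  (D : V -> V -> R).
Hypothesis derD : derivation mul nrm D.

Lemma derivation_lin1 x : lin_form (fun a => D a x).
Proof. by case: derD => _ D_lin _ _ k a b; apply: D_lin. Qed.

Lemma derivation_lin2 a : lin_form (D a).
Proof. by case: derD => /(_ a) [D_lin _]. Qed.

Lemma derivation0 x : D 0 x = 0.
Proof. exact: (lin_form0 (derivation_lin1 x)). Qed.

Lemma derivationD1 a b x : D (a + b) x = D a x + D b x.
Proof. exact: (lin_formD (derivation_lin1 x)). Qed.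

Lemma derivationZ1 k a x : D (k *: a) x = k * D a x.
Proof. exact: (lin_formZ (derivation_lin1 x)). Qed.

Lemma derivationD2 a x y : D a (x + y) = D a x + D a y.
Proof. exact: (lin_formD (derivation_lin2 a)). Qed.

Lemma derivationZ2 a k x : D a (k *: x) = k * D a x.
Proof. exact: (lin_formZ (derivation_lin2 a)). Qed.

End Derivations.

Lemma cyclic_derN (R : numFieldType) (V : lmodType R) (mul : V -> V -> V)
  (nrm : V -> R) (D : V -> V -> R) :
  cyclic_der mul nrm D -> forall x y, D x y = - D y x.
Proof. by case=> _ cycD x y; apply/eqP; rewrite -addr_eq0 cycD. Qed.

Section LauProduct.
Variables (R : numFieldType) (A B : lmodType R)
  (mulA : A -> A -> A) (nA : A -> R) (mulB : B -> B -> B) (nB : B -> R)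
  (phi : A -> R).
Hypotheses (nA_ge0 : forall x, 0 <= nA x) (nB_ge0 : forall y, 0 <= nB y).

Local Notation mul := (lau_mul phi mulA mulB).
Local Notation nrm := (lau_norm nA nB).

Lemma dual_elem_pair (f : A -> R) (g : B -> R) :
  dual_elem nA f -> dual_elem nB g -> dual_elem nrm (fun p => f p.1 + g p.2).
Proof.
move=> [f_lin [Mf fMf]] [g_lin [Mg gMg]]; split.
  by move=> k [x1 x2] [y1 y2] /=; rewrite f_lin g_lin; ring.
by exists (`|Mf| + `|Mg|) => -[x1 x2]; apply: ler_normD_bounds.
Qed.

Lemma dual_elem_inl (F : A * B -> R) :
  nB 0 = 0 -> dual_elem nrm F -> dual_elem nA (fun x => F (x, 0)).
Proof.
move=> nB0 [F_lin [M FM]]; split.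
  by move=> k x y; rewrite -F_lin; congr F; apply/eqP;
    rewrite xpair_eqE /= scaler0 addr0 !eqxx.
by exists M => x; have := FM (x, 0); rewrite /lau_norm /= nB0 addr0.
Qed.

Lemma dual_elem_inr (F : A * B -> R) :
  nA 0 = 0 -> dual_elem nrm F -> dual_elem nB (fun y => F (0, y)).
Proof.
move=> nA0 [F_lin [M FM]]; split.
  by move=> k x y; rewrite -F_lin; congr F; apply/eqP;
    rewrite xpair_eqE /= scaler0 addr0 !eqxx.
by exists M => y; have := FM (0, y); rewrite /lau_norm /= nA0 add0r.
Qed.

Lemma lau_der_leibniz (D1 : A -> A -> R) (D4 : B -> B -> R) :
  derivation mulA nA D1 -> cyclic_der mulB nB D4 ->
  forall p q x, lau_der D1 D4 (mul p q) x
                = lau_der D1 D4 q (mul x p) + lau_der D1 D4 p (mul q x).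
Proof.
move=> derD1 cycD4 [a b] [a' b'] [x1 x2]; have [derD4 _] := cycD4.
have [_ _ _ leibD1] := derD1; have [_ _ _ leibD4] := derD4.
rewrite /lau_der /lau_mul /= leibD1 !(derivationD1 derD4) !(derivationZ1 derD4).
rewrite leibD4 !(derivationD2 derD4) !(derivationZ2 derD4).
rewrite (cyclic_derN cycD4 b b').
ring.
Qed.

Lemma lau_der_derivation (D1 : A -> A -> R) (D4 : B -> B -> R) :
  derivation mulA nA D1 -> cyclic_der mulB nB D4 ->
  derivation mul nrm (lau_der D1 D4).
Proof.
move=> derD1 cycD4; have [derD4 _] := cycD4.
have [dual1 _ [M1 bnd1] _] := derD1; have [dual4 _ [M4 bnd4] _] := derD4.
split.
- by move=> [a b]; apply: dual_elem_pair.
- move=> k [a b] [a' b'] x.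
  by rewrite /lau_der /= (derivation_lin1 derD1) (derivation_lin1 derD4); ring.
- by exists (`|M1| + `|M4|) => -[a b] [x1 x2]; apply: ler_normD_bounds2.
- exact: lau_der_leibniz.
Qed.

Lemma inner_lau_der_inl (D1 : A -> A -> R) (D4 : B -> B -> R) :
  mulB 0 0 = 0 -> nB 0 = 0 -> D4 0 0 = 0 ->
  inner_der mul nrm (lau_der D1 D4) -> inner_der mulA nA D1.
Proof.
move=> mulB00 nB0 D400 [F [dualF innerF]].
exists (fun x => F (x, 0)); split; first exact: dual_elem_inl.
move=> a x; have := innerF (a, 0) (x, 0).
by rewrite /lau_der /lau_mul /= D400 addr0 !scaler0 mulB00 !addr0.
Qed.

Lemma inner_lau_der_inr (D1 : A -> A -> R) (D4 : B -> B -> R) :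
  mulA 0 0 = 0 -> phi 0 = 0 -> nA 0 = 0 -> D1 0 0 = 0 ->
  inner_der mul nrm (lau_der D1 D4) -> inner_der mulB nB D4.
Proof.
move=> mulA00 phi0 nA0 D100 [F [dualF innerF]].
exists (fun y => F (0, y)); split; first exact: dual_elem_inr.
move=> b y; have := innerF (0, b) (0, y).
by rewrite /lau_der /lau_mul /= D100 add0r mulA00 phi0 !scale0r !add0r.
Qed.

Lemma inner_lau_der_pair (D1 : A -> A -> R) (D4 : B -> B -> R) :
  inner_der mulA nA D1 -> inner_der mulB nB D4 ->
  inner_der mul nrm (lau_der D1 D4).
Proof.
move=> [f [dualf innerf]] [g [dualg innerg]].
exists (fun p => f p.1 + g p.2); split; first exact: dual_elem_pair.
move=> [a b] [x1 x2]; rewrite /lau_der /lau_mul /= innerf innerg.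
by rewrite !(lin_formD dualg.1); ring.
Qed.

End LauProduct.

Section LauCohomology.
Variables (R : numFieldType) (A B : lmodType R)
  (mulA : A -> A -> A) (nA : A -> R) (mulB : B -> B -> B) (nB : B -> R)
  (phi : A -> R).
Hypotheses (banachA : banach_algebra mulA nA) (banachB : banach_algebra mulB nB)
  (charphi : character mulA phi).

Lemma inner_lau_derE (D1 : A -> A -> R) (D4 : B -> B -> R) :
  D1 0 0 = 0 -> D4 0 0 = 0 ->
  inner_der (lau_mul phi mulA mulB) (lau_norm nA nB) (lau_der D1 D4) <->
  inner_der mulA nA D1 /\ inner_der mulB nB D4.
Proof.
move=> D100 D400; split=> [innerD | [innerD1 innerD4]].
  split; first exact: inner_lau_der_inl (banach_mul0l banachB 0)
                        (banach_norm0 banachB) D400 innerD.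
  exact: inner_lau_der_inr (banach_mul0l banachA 0) (character0 charphi)
           (banach_norm0 banachA) D100 innerD.
exact: (inner_lau_der_pair phi (banach_norm_ge0 banachA)
          (banach_norm_ge0 banachB) innerD1 innerD4).
Qed.

End LauCohomology.

Lemma lau_der_comb (R : numFieldType) (A B : lmodType R) (k : R)
  (D1 D1' : A -> A -> R) (D4 D4' : B -> B -> R) :
  lau_der (der_comb k D1 D1') (der_comb k D4 D4')
  = der_comb k (lau_der D1 D4) (lau_der D1' D4').
Proof.
by apply: functional_extensionality => p; apply: functional_extensionality => q;
  rewrite /lau_der /der_comb; ring.
Qed.

Lemma lau_der_sub (R : numFieldType) (A B : lmodType R)
  (D1 D1' : A -> A -> R) (D4 D4' : B -> B -> R) :
  der_sub (lau_der D1 D4) (lau_der D1' D4')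
  = lau_der (der_sub D1 D1') (der_sub D4 D4').
Proof.
by apply: functional_extensionality => p; apply: functional_extensionality => q;
  rewrite /lau_der /der_sub; ring.
Qed.

Theorem theorem6p15 (R : numFieldType) (A B : lmodType R)
  (mulA : A -> A -> A) (nA : A -> R) (mulB : B -> B -> B) (nB : B -> R)
  (hA : banach_algebra mulA nA) (hB : banach_algebra mulB nB)
  (phi : A -> R) (hphi : character mulA phi) :
  (forall (D1 : A -> A -> R) (D4 : B -> B -> R),
     derivation mulA nA D1 -> cyclic_der mulB nB D4 ->
     derivation (lau_mul phi mulA mulB) (lau_norm nA nB) (lau_der D1 D4) /\
     (inner_der (lau_mul phi mulA mulB) (lau_norm nA nB) (lau_der D1 D4) <->
      inner_der mulA nA D1 /\ inner_der mulB nB D4)) /\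
  (forall (k : R) (D1 D1' : A -> A -> R) (D4 D4' : B -> B -> R),
     lau_der (der_comb k D1 D1') (der_comb k D4 D4')
     = der_comb k (lau_der D1 D4) (lau_der D1' D4')) /\
  (* it induces a well-defined (<-) injective (->) map
     H^1(A,A^* ) (+) H^1_c(B,B^* ) -> H^1(A (+)_phi B, (A (+)_phi B)^* ) *)
  (forall (D1 D1' : A -> A -> R) (D4 D4' : B -> B -> R),
     derivation mulA nA D1 -> derivation mulA nA D1' ->
     cyclic_der mulB nB D4 -> cyclic_der mulB nB D4' ->
     (inner_der (lau_mul phi mulA mulB) (lau_norm nA nB)
        (der_sub (lau_der D1 D4) (lau_der D1' D4')) <->
      inner_der mulA nA (der_sub D1 D1') /\ inner_der mulB nB (der_sub D4 D4'))).
Proof.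
split; [|split].
- move=> D1 D4 derD1 cycD4; have [derD4 _] := cycD4; split.
    exact: (lau_der_derivation phi (banach_norm_ge0 hA) (banach_norm_ge0 hB)
              derD1 cycD4).
  apply: (inner_lau_derE hA hB hphi).
    exact: (derivation0 derD1).
  exact: (derivation0 derD4).
- exact: lau_der_comb.
- move=> D1 D1' D4 D4' derD1 derD1' [derD4 _] [derD4' _].
  rewrite lau_der_sub; apply: (inner_lau_derE hA hB hphi).
    by rewrite /der_sub (derivation0 derD1) (derivation0 derD1') subr0.
  by rewrite /der_sub (derivation0 derD4) (derivation0 derD4') subr0.
Qed.
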